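(* For every prime $p$, there exist a conic $Q\subset\mathbb P^2$ defined over $\mathbb F_{p^2}$ and a point $t\in C\cap Q$ (over $\overline{\mathbb F}_p$) such that $[\mathbb F_{p^2}(t):\mathbb F_{p^2}]=2(p+1)$.
   Context: $C\subset\mathbb P^2$ is the Fermat curve $X_1^{p+1}+X_2^{p+1}+X_3^{p+1}=0$. Conics include degenerate ones (zero loci of nonzero homogeneous quadratic forms over $\mathbb F_{p^2}$). $\mathbb F_{p^2}(t)$ is the field generated over $\mathbb F_{p^2}$ by the ratios of coordinates of $t$. *)

From HB Require Import structures.
From mathcomp Require Import all_boot all_order all_algebra all_field.
Set Implicit Arguments. Unset Strict Implicit. Unset Printing Implicit Defensive.
Import GRing.Theory.
Local Open Scope ring_scope.

(* A point of P^2 over an extension field L is represented by homogeneous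
   coordinates x : 'I_3 -> L, not all zero. *)
Definition nonzero_coords (L : fieldType) (x : 'I_3 -> L) : Prop :=
  exists i, x i != 0.

Definition on_fermat (L : fieldType) (p : nat) (x : 'I_3 -> L) : Prop :=
  \sum_(i < 3) x i ^+ p.+1 = 0.

(* A quadratic form over F in X1,X2,X3, given by its coefficients
   c i j for i <= j (the entries with i > j are ignored):
   Q = \sum_{i <= j} c_ij X_i X_j.  Conics (including degenerate ones) are zero loci of such. *)
Definition nonzero_qform (F : fieldType) (c : 'M[F]_3) : Prop :=
  exists i j : 'I_3, (i <= j)%N /\ c i j != 0.

Definition on_conic (F : fieldType) (L : fieldExtType F) (c : 'M[F]_3)
    (x : 'I_3 -> L) : Prop :=
  \sum_(i < 3) \sum_(j < 3 | (i <= j)%N) (c i j)%:A * x i * x j = 0.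

Definition coord_ratios (L : fieldType) (x : 'I_3 -> L) : seq L :=
  [seq x i / x j | i <- enum 'I_3, j <- [seq j <- enum 'I_3 | x j != 0]].

(* Degree over F of the field F(t) generated by the coordinate ratios of t. *)
Definition ratio_field_degree (F : fieldType) (L : fieldExtType F)
    (x : 'I_3 -> L) : nat :=
  \dim <<1%VS & coord_ratios x>>%VS.

From HB Require Import structures.
From mathcomp Require Import all_boot all_order all_algebra all_field.
From mathcomp Require Import fingroup cyclic pgroup ring zify.
Set Implicit Arguments. Unset Strict Implicit. Unset Printing Implicit Defensive.
Import GRing.Theory.
Local Open Scope ring_scope.

(* Let q = #|F| = p^2.  Pick w in F such that w^(p-1) is a primitive (p+1)-st
   root of unity and Y^2 - (w - 2) Y + 1 has no root in F: for p = 2 a primitive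
   cube root of unity does; for p odd, w = c g with g a generator of F^* and
   c in F_p read off a nonsquare of the form a + b g^-1.  In a splitting field
   take x such that h = x^(p+1) is a root of that quadratic, and s with
   s^(p+1) = -(1 + h).  Then h lies in F_(q^2) but not in F and has norm 1, so
   x^(q^2) = x <> x^q; and -(1 + h) has norm w, so s^(q^2) = w^(p-1) s.  Hence
   t = (s : 1 : x) lies on C and on the line pair X_3 = x X_2, X_3 = x^q X_2
   defined over F, and F(t) = F(s, x) has degree exactly 2(p+1) over F. *)

Section FiniteFieldSquares.

Variable F : finFieldType.

Lemma expf_card_pred (x : F) : x != 0 -> x ^+ #|F|.-1 = 1.
Proof.
move=> x0; apply: (mulfI x0); rewrite -exprS prednK ?expf_card ?mulr1 //.
exact: ltnW (finNzRing_gt1 F).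
Qed.

Lemma finField_prim_root : exists g : F, #|F|.-1.-primitive_root g.
Proof.
have /hasP[g _ prim_g] : has #|F|.-1.-primitive_root (enum (predC1 (0 : F))).
  apply: has_prim_root; last by rewrite -cardE cardC1.
  - by rewrite -ltnS prednK ?finNzRing_gt1 ?(ltnW (finNzRing_gt1 F)).
  - by apply/allP => x; rewrite mem_enum => x0; apply/unity_rootP/expf_card_pred.
  - exact: enum_uniq.
by exists g.
Qed.

Hypothesis oddF : odd #|F|.

Lemma half_card_pred_gt0 : (0 < #|F|.-1./2)%N.
Proof. have := finNzRing_gt1 F; move: oddF; case: #|F| => [|[|[|n]]] //. Qed.

Lemma finField_sqrP (z : F) :
  z != 0 -> (exists r, r ^+ 2 = z) <-> z ^+ #|F|.-1./2 = 1.
Proof.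
have card_half : (2 * #|F|.-1./2 = #|F|.-1)%N.
  by rewrite mul2n -[RHS]odd_double_half -subn1 oddB ?oddF ?(ltnW (finNzRing_gt1 F)).
move=> z0; split=> [[r rz]|zm].
  have r0 : r != 0 by apply: contraNneq z0 => r0; rewrite -rz r0 expr0n.
  by rewrite -rz -exprM card_half expf_card_pred.
have [g prim_g] := finField_prim_root.
have [i zi] := prim_rootP prim_g (expf_card_pred z0).
have : (#|F|.-1 %| i * #|F|.-1./2)%N by rewrite (prim_order_dvd prim_g) exprM -zi zm.
rewrite -{1}card_half dvdn_pmul2r ?half_card_pred_gt0 // => /dvdnP[k ik].
by exists (g ^+ k); rewrite zi ik -exprM.
Qed.

Lemma has_nonsquare (Z : seq F) :
  uniq Z -> 0 \notin Z -> (#|F|.-1./2 < size Z)%N ->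
  exists2 z, z \in Z & forall r, r ^+ 2 != z.
Proof.
move=> uZ Z0 szZ; have Z_neq0 z : z \in Z -> z != 0 by apply: contraTneq => ->.
have [allm | ] := boolP (all #|F|.-1./2.-unity_root Z).
  by have := max_unity_roots half_card_pred_gt0 allm uZ; rewrite leqNgt szZ.
rewrite -has_predC => /hasP[z zZ /= zm]; exists z => // r; apply: contra zm => /eqP rz.
by apply/unity_rootP; apply/finField_sqrP; [exact: Z_neq0 | exists r].
Qed.

End FiniteFieldSquares.

Section FrobeniusOverFiniteField.

Variables (F : finFieldType) (L : fieldExtType F).
Local Notation q := #|F|.

Lemma pchar_nat_card : [pchar L].-nat q.
Proof.
have [p _ chFp] := finPcharP F.
apply: (@sub_in_pnat p) => [r _ /eqnP-> | ]; first by rewrite (pchar_lalg L).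
by have := pprimeChar_pgroup chFp; rewrite /pgroup cardsT.
Qed.

Lemma expf_cardD (y z : L) : (y + z) ^+ q = y ^+ q + z ^+ q.
Proof. exact: exprDn_pchar pchar_nat_card. Qed.

Lemma expf_cardN (y : L) : (- y) ^+ q = - y ^+ q.
Proof. exact: exprNn_pchar pchar_nat_card. Qed.

Lemma expf_card_alg (c : F) : (c%:A : L) ^+ q = c%:A.
Proof. by rewrite -in_algE -rmorphXn expf_card. Qed.

Lemma mem1v_expf_card (y : L) : (y \in 1%VS) = (y ^+ q == y).
Proof. by rewrite (Fermat's_little_theorem 1%AS) dimv1 expn1. Qed.

Lemma quadratic_root_expf_card (b c : F) (y : L) :
  y ^+ 2 - b%:A * y + c%:A = 0 -> y \notin 1%VS -> y ^+ q = b%:A - y.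
Proof.
move=> yb; rewrite mem1v_expf_card => yqy.
have yqb : (y ^+ q) ^+ 2 - b%:A * y ^+ q + c%:A = 0.
  have := congr1 (fun u => u ^+ q) yb.
  rewrite /= expr0n (gtn_eqF (ltnW (finNzRing_gt1 F))) mulr0n => <-.
  by rewrite !expf_cardD expf_cardN !exprMn !expf_card_alg -expr2.
have : (y ^+ q - y) * (y ^+ q - (b%:A - y)) = 0.
  by rewrite -[RHS](subrr 0) -{1}yqb -yb; ring.
by move/eqP; rewrite mulf_eq0 subr_eq0 (negbTE yqy) subr_eq0 => /eqP.
Qed.

End FrobeniusOverFiniteField.

Lemma exprXn_twist (R : comPzRingType) (Q k : nat) (y z : R) :
  y ^+ Q = z * y -> z ^+ Q = z -> y ^+ (Q ^ k) = z ^+ k * y.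
Proof.
move=> yQ zQ; elim: k => [|k IHk]; first by rewrite expn0 expr1 expr0 mul1r.
by rewrite expnSr exprM IHk exprMn exprAC zQ yQ exprSr mulrA.
Qed.

Lemma expr_norm_twist (R : comPzRingType) (p : nat) (y u v : R) : (0 < p)%N ->
  y ^+ p.+1 = u -> u ^+ (p ^ 2).+1 = v -> y ^+ (p ^ 2 * p ^ 2) = v ^+ p.-1 * y.
Proof.
move=> p_gt0 yu uv; have -> : (p ^ 2 * p ^ 2 = p.+1 * ((p ^ 2).+1 * p.-1) + 1)%N.
  by case: p p_gt0 {yu uv} => // n _; rewrite !expnS expn0; nia.
by rewrite exprD expr1 exprM yu exprM uv.
Qed.

Lemma size_XnaddP (R : nzRingType) (n : nat) (r : {poly R}) :
  (size r <= n)%N -> size ('X^n + r) = n.+1.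
Proof. by move=> rn; rewrite size_polyDl size_polyXn // ltnS. Qed.

Lemma dvdp_split_root (L : fieldType) (P G : {poly L}) (rs : seq L) :
  P %= \prod_(z <- rs) ('X - z%:P) -> G %| P -> (1 < size G)%N ->
  exists z, root G z.
Proof.
move=> splitP; rewrite (eqp_dvdr _ splitP) => /dvdp_prod_XsubC[m Gm] G_gt1.
case: (mask m rs) Gm => [|z zs] Gm.
  by move: G_gt1; rewrite (eqp_size Gm) big_nil size_poly1.
by exists z; rewrite (eqp_root Gm) root_prod_XsubC mem_head.
Qed.

Section DegreeOverFiniteField.

Variable F : finFieldType.
Local Notation q := #|F|.

Lemma dim_adjoin_dvdn (L : splittingFieldType F) (rs : seq L) (n : nat) :
  (forall z, z \in rs -> z ^+ (q ^ n) = z) -> (\dim <<1 & rs>> %| n)%N.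
Proof.
move=> rs_fixed; pose E := <<1 & rs>>%AS.
have [alpha gen_alpha alphaE] := finField_galois_generator (sub1v E).
have alphaXE k z : z \in E -> (alpha ^+ k)%g z = z ^+ (q ^ k).
  move=> zE; elim: k => [|k IHk]; first by rewrite expg0 gal_id expn0 expr1.
  rewrite expgSr galM // IHk alphaE ?rpredX // dimv1 expn1.
  by rewrite -exprM -expnSr.
have sub_fixed : (E <= fixedField [set (alpha ^+ n)%g])%VS.
  apply/Fadjoin_seqP; split=> [|z zrs]; first exact: sub1v.
  have zE : z \in E by exact: seqv_sub_adjoin.
  by apply/fixedFieldP => // _ /set1P->; rewrite alphaXE // rs_fixed.
have alphan1 : (alpha ^+ n == 1)%g.
  apply/gal_eqP => z zE; rewrite gal_id.
  by have /mem_fixedFieldP[_ ->] := subvP sub_fixed z zE; rewrite ?set11.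
have <- : #[alpha]%g = \dim E.
  rewrite orderE -(eqP gen_alpha) -galois_dim ?finField_galois ?sub1v //.
  by rewrite dimv1 divn1.
by rewrite order_dvdn.
Qed.

Lemma dim_twisted_dvdn (L : fieldExtType F) (E : {subfield L}) (m : nat)
    (zeta : F) (x s : L) :
  m.-primitive_root zeta -> x \in E -> x ^+ q != x -> x ^+ (q * q) = x ->
  s \in E -> s != 0 -> s ^+ (q * q) = zeta%:A * s -> (2 * m %| \dim E)%N.
Proof.
move=> prim_zeta xE xq xqq sE s0 sqq.
have zeta_fixed : (zeta%:A : L) ^+ (q * q) = zeta%:A.
  by rewrite exprM !expf_card_alg.
move: (Fermat's_little_theorem E x) (Fermat's_little_theorem E s) => /=.
rewrite xE sE -(odd_double_half (\dim E)) expnD -mul2n expnM expnS expn1.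
case: (odd _) => /esym/eqP xEq /esym/eqP sEq /=.
  have xqq1 : x ^+ (q * q) = 1 * x by rewrite mul1r.
  move: xq; rewrite -{2}xEq expn1 exprM exprAC (exprXn_twist _ xqq1 (expr1n _ _)).
  by rewrite expr1n mul1r eqxx.
move: sEq; rewrite expn0 mul1n (exprXn_twist _ sqq zeta_fixed) -{2}[s]mul1r.
move/(mulIf s0)/eqP; rewrite -in_algE -rmorphXn -(rmorph1 (in_alg L)).
by rewrite (inj_eq (fmorph_inj _)) -(prim_order_dvd prim_zeta) add0n dvdn_pmul2l.
Qed.

End DegreeOverFiniteField.

Lemma mem_coord_ratios (L : fieldType) (x : 'I_3 -> L) (i j : 'I_3) :
  x j != 0 -> x i / x j \in coord_ratios x.
Proof.
move=> xj; apply: allpairs_f; first by rewrite mem_enum.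
by rewrite mem_filter xj mem_enum.
Qed.

Lemma coord_ratios_fixed (L : fieldType) (x : 'I_3 -> L) (n : nat) :
  (forall i, x i ^+ n = x i) -> forall z, z \in coord_ratios x -> z ^+ n = z.
Proof. by move=> xn z /allpairsP[[i j] [_ _ ->]]; rewrite exprMn exprVn !xn. Qed.

Definition fermat_point (L : fieldType) (s x : L) : 'I_3 -> L :=
  fun i => [:: s; 1; x]`_i.

Lemma on_fermat_point (L : fieldType) (p : nat) (s x : L) :
  s ^+ p.+1 + 1 + x ^+ p.+1 = 0 -> on_fermat p (fermat_point s x).
Proof. by rewrite /on_fermat !big_ord_recl big_ord0 /= expr1n addr0 addrA. Qed.

(* N X_2^2 - T X_2 X_3 + X_3^2, i.e. the lines X_3 = r X_2 over the roots r of
   Y^2 - T Y + N. *)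
Definition quadratic_qform (F : fieldType) (T N : F) : 'M[F]_3 :=
  \matrix_(i < 3, j < 3)
    (nth [::] [:: [:: 0; 0; 0]; [:: 0; N; - T]; [:: 0; 0; 1]] i)`_j.

Lemma nonzero_quadratic_qform (F : fieldType) (T N : F) :
  nonzero_qform (quadratic_qform T N).
Proof. by exists ord_max, ord_max; rewrite mxE oner_eq0. Qed.

Lemma on_quadratic_qform (F : fieldType) (L : fieldExtType F) (T N : F) (s x : L) :
  x ^+ 2 - T%:A * x + N%:A = 0 -> on_conic (quadratic_qform T N) (fermat_point s x).
Proof.
move=> xTN; rewrite /on_conic; under eq_bigr do rewrite big_mkcond.
rewrite !big_ord_recl !big_ord0 /= !mxE /= /fermat_point /=.
by rewrite !scale0r !mul0r !(add0r, addr0) scaleNr scale1r !mulr1 -xTN; ring.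
Qed.

Definition admissible_norm (p : nat) (F : fieldType) (w : F) : Prop :=
  p.+1.-primitive_root (w ^+ p.-1) /\
  forall r : F, r ^+ 2 - (w - 2%:R) * r + 1 != 0.

Lemma admissible_norm_card4 (F : finFieldType) :
  #|F| = 4%N -> exists w : F, admissible_norm 2 w.
Proof.
move=> cardF; have [w prim_w] := finField_prim_root F; rewrite cardF in prim_w.
exists w; split=> // r; apply/eqP => rw.
have w0 : w != 0 by rewrite (prim_root_eq0 prim_w).
have w1 : w != 1 by move: (prim_order_dvd prim_w 1); rewrite expr1 => <-.
have w2w1 : w ^+ 2 + w + 1 = 0.
  have : (w - 1) * (w ^+ 2 + w + 1) = w ^+ 3 - 1 by ring.
  rewrite (prim_expr_order prim_w) subrr => /eqP.
  by rewrite mulf_eq0 subr_eq0 (negbTE w1) => /eqP.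
have two0 : 2%:R = 0 :> F.
  by apply: pcharf0 (@card_finPcharP _ 2 2 cardF isT).
have r4 : r ^+ 4 = r by rewrite -cardF expf_card.
(* For a root r the identity reduces to r^4 - r = w, whereas r^4 = r. *)
have : r ^+ 4 - r - w = (r ^+ 2 - (w - 2%:R) * r + 1) * (r ^+ 2 + w * r + w ^+ 2 - 1)
    + r * (w ^+ 3 - 1) - (w ^+ 2 + w + 1)
    + 2%:R * (r + 1 - r * w - r ^+ 3 - r ^+ 2 * w - r * w ^+ 2) by ring.
rewrite rw w2w1 two0 r4 (prim_expr_order prim_w).
rewrite !(subrr, mul0r, mulr0, add0r, addr0, sub0r).
by move/eqP; rewrite oppr_eq0 (negbTE w0).
Qed.

Lemma half_sqr_pred (n : nat) : odd n -> ((n ^ 2).-1./2 = n.-1 * n.+1./2)%N.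
Proof.
move=> n_odd; rewrite -(odd_double_half n) n_odd add1n; move: (n./2) => k.
rewrite succnK -doubleS doubleK.
have -> : ((k.*2.+1) ^ 2).-1 = (k * k.+1).*2.*2 by rewrite -!mul2n; nia.
by rewrite doubleK doubleMl.
Qed.

Section OddCharacteristic.

Variables (p : nat) (hp : prime p) (p_odd : odd p).
Variables (F : finFieldType) (cardF : #|F| = (p ^ 2)%N).

Let chF : p \in [pchar F] := card_finPcharP cardF hp.
Local Notation K := (pPrimeCharType chF).
Let cardK : #|K| = (p ^ 2)%N := cardF.

Lemma Fp_alg_expn (a : 'F_p) : (a%:A : K) ^+ p = a%:A.
Proof.
by rewrite -in_algE -rmorphXn; have := expf_card a; rewrite card_Fp // => ->.
Qed.

Lemma Fp_alg_expn_pred (a : 'F_p) : a != 0 -> (a%:A : K) ^+ p.-1 = 1.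
Proof.
move=> a0; have a0K : (a%:A : K) != 0 by rewrite scaler_eq0 oner_eq0 orbF.
by apply: (mulfI a0K); rewrite -exprS prednK ?prime_gt0 // Fp_alg_expn mulr1.
Qed.

Lemma Fp_alg_sqr (a : 'F_p) : a != 0 -> exists r : K, r ^+ 2 = a%:A.
Proof.
move=> a0; apply/finField_sqrP; first by rewrite cardK oddX p_odd.
  by rewrite scaler_eq0 oner_eq0 orbF.
rewrite cardK half_sqr_pred //.
by rewrite exprM Fp_alg_expn_pred // expr1n.
Qed.

Lemma Fp_affine_inj (u : K) (a b a' b' : 'F_p) : u ^+ p != u ->
  a%:A + b%:A * u = a'%:A + b'%:A * u -> a = a' /\ b = b'.
Proof.
move=> uFp; have [<- /addIr/(fmorph_inj (in_alg K)) // | bb' E] := eqVneq b b'.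
case/negP: uFp; have bb'K : ((b - b')%:A : K) != 0.
  by rewrite scaler_eq0 oner_eq0 orbF subr_eq0.
have -> : u = in_alg K ((a' - a) / (b - b')).
  rewrite fmorph_div /= ?in_algE; apply: (mulIf bb'K); rewrite divfK //.
  move/eqP: E; rewrite -subr_eq0 => /eqP E0.
  by apply/eqP; rewrite -subr_eq0 -E0 !scalerBl; apply/eqP; ring.
by rewrite in_algE Fp_alg_expn.
Qed.

Lemma exists_nonsquare_affine (u : K) : u ^+ p != u ->
  exists a b : 'F_p, [/\ a != 0, b != 0 & forall r : K, r ^+ 2 != a%:A + b%:A * u].
Proof.
move=> uFp.
pose Z := [seq a%:A + b%:A * u | a <- enum (predC1 (0 : 'F_p)), b <- enum 'F_p].
have [z /allpairsP[[a b] [+ _ ->]] z_nsq] : exists2 z, z \in Z & forall r, r ^+ 2 != z.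
  apply: has_nonsquare; first by rewrite cardK oddX p_odd.
  - apply: allpairs_uniq; rewrite ?enum_uniq //.
    by move=> [a b] [a' b'] _ _ /= /(Fp_affine_inj uFp) [-> ->].
  - apply/negP => /allpairsP[[a b] [+ _ /esym E0]]; rewrite mem_enum /= => /eqP; apply.
    have := @Fp_affine_inj u a b 0 0 uFp.
    by rewrite scale0r mul0r addr0 -E0 => /(_ erefl)[].
  rewrite size_allpairs -!cardE cardC1 card_Fp // cardK half_sqr_pred //.
  rewrite ltn_pmul2l ?ltn_half_double -?mul2n; have := prime_gt1 hp; lia.
rewrite mem_enum /= => a0; exists a, b; split=> //.
apply/eqP => b0; have [r ra] := Fp_alg_sqr a0.
by move/eqP: (z_nsq r); rewrite ra b0 scale0r mul0r addr0.
Qed.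

Lemma Fp_four_neq0 : (4%:R : 'F_p) != 0.
Proof.
rewrite -(dvdn_pcharf (pchar_Fp hp)) -[4%N]/(2 ^ 2)%N Euclid_dvdX // dvdn_prime2 //.
by rewrite andbT; apply: contraTN p_odd => /eqP->.
Qed.

Lemma admissible_norm_odd : exists w : F, admissible_norm p w.
Proof.
have [g prim_g] := finField_prim_root K.
have p_gt1 := prime_gt1 hp.
have cardK1 : (#|K|.-1 = p.-1 * p.+1)%N.
  by rewrite cardK; case: (p) p_gt1 => // n _; rewrite !expnS expn0; nia.
have g0 : g != 0.
  by rewrite (prim_root_eq0 prim_g) cardK1 muln_eq0 negb_or -!lt0n; lia.
have uFp : g^-1 ^+ p != g^-1.
  rewrite exprVn (inj_eq (@invr_inj _)); apply/eqP => gp.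
  have : g ^+ p.-1 == 1.
    by rewrite -(inj_eq (mulfI g0)) -exprS prednK ?gp ?mulr1 ?prime_gt0.
  rewrite -(prim_order_dvd prim_g) cardK1 => /dvdn_leq le_p.
  by have := le_p ltac:(lia); nia.
have [a [b [a0 b0 nsq]]] := exists_nonsquare_affine uFp.
(* With c = -4a/b, the discriminant w^2 - 4w of r^2 - (w - 2) r + 1 equals
   (w / rho)^2 (a + b g^-1) where rho^2 = a, hence is a nonsquare. *)
pose c : 'F_p := - 4%:R * a / b.
have c0 : c != 0 by rewrite !mulf_neq0 ?invr_eq0 ?oppr_eq0 ?Fp_four_neq0.
pose w : K := c%:A * g.
exists w; split.
  rewrite exprMn Fp_alg_expn_pred // mul1r.
  have := exp_prim_root prim_g p.-1.
  by rewrite cardK1 gcdnMr mulKn // -ltnS prednK // prime_gt0.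
move=> r; apply/eqP => rw; have [rho rho_a] := Fp_alg_sqr a0.
have cE : c%:A = - 4%:R * a%:A / b%:A :> K.
  by rewrite -!in_algE fmorph_div rmorphM rmorphN rmorph_nat.
have b0K : (b%:A : K) != 0 by rewrite scaler_eq0 oner_eq0 orbF.
have four0 : (4%:R : K) != 0.
  by rewrite -(rmorph_nat (in_alg K)) fmorph_eq0 Fp_four_neq0.
pose R := 2%:R * r - (w - 2%:R).
have R2 : R ^+ 2 = w ^+ 2 - 4%:R * w.
  by apply/eqP; rewrite -subr_eq0 -(mulr0 4%:R) -rw; apply/eqP; rewrite /R; ring.
move/eqP: (nsq (R * rho / w)); apply.
rewrite expr_div_n exprMn R2 rho_a /w cE; field.
by rewrite g0 b0K oppr_eq0 four0 scaler_eq0 oner_eq0 orbF a0.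
Qed.

End OddCharacteristic.

Lemma exists_admissible_norm (p : nat) (F : finFieldType) :
  prime p -> #|F| = (p ^ 2)%N -> exists w : F, admissible_norm p w.
Proof.
move=> hp cardF; have [p2 | p_odd] := even_prime hp; last exact: admissible_norm_odd.
by move: cardF; rewrite p2; exact: admissible_norm_card4.
Qed.

Section FermatConicPoint.

Variables (p : nat) (hp : prime p) (F : finFieldType).
Variables (w : F) (w_adm : admissible_norm p w).
Local Notation q := #|F|.
Let tau := w - 2%:R.

Lemma admissible_norm_neq0 : w != 0.
Proof.
apply/eqP => w0; have := prim_root_eq0 w_adm.1.
by rewrite w0 expf_eq0 eqxx andbT ltn_predRL prime_gt1.
Qed.

Lemma exists_fermat_twist_roots : exists (L : splittingFieldType F) (x s : L),
  (x ^+ p.+1) ^+ 2 - tau%:A * x ^+ p.+1 + 1 = 0 /\ s ^+ p.+1 + 1 + x ^+ p.+1 = 0.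
Proof.
pose P1 : {poly F} := 'X^(2 * p.+1) + (1 - tau%:P * 'X^(p.+1)).
pose P2 : {poly F} := ('X^(p.+1) + 1) ^+ 2 + tau%:P * ('X^(p.+1) + 1) + 1.
(* With Q = Y^2 - tau Y + 1 we have P1 = Q(X^(p+1)) and P2 = Q(-(X^(p+1) + 1));
   once Q(h) = 0, Q = (Y - h)(Y - (tau - h)) yields the factor of P2 below. *)
have P0 : P1 * P2 != 0.
  apply: contra_neq admissible_norm_neq0 => /(congr1 (horner^~ 0)).
  rewrite /P1 /P2 /tau !hornerE !expr0n /=.
  rewrite !(mul0r, mulr0, add0r, addr0, subr0) expr1n.
  by move=> <-; ring.
have [L [rs splitL _]] := FinSplittingFieldFor P0; rewrite /= rmorphM /= in splitL.
have [x] : exists x, root (map_poly (in_alg L) P1) x.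
  apply: dvdp_split_root splitL (dvdp_mulr _ (dvdpp _)) _.
  rewrite rmorphD rmorphB rmorphM rmorph1 /= !map_polyXn map_polyC /= size_XnaddP //.
  rewrite (leq_trans (size_polyD _ _)) // geq_max size_poly1 muln_gt0 /= size_polyN.
  rewrite (leq_trans (size_polyMleq _ _)) // size_polyC size_polyXn.
  by case: (_ != 0) => /=; lia.
rewrite rootE rmorphD rmorphB rmorphM rmorph1 /= !map_polyXn map_polyC /= !hornerE.
move=> /eqP /=; rewrite mulnC exprM addrAC; set h := x ^+ p.+1 => hx.
have G_dvd : 'X^(p.+1) + (1 + h)%:P %| map_poly (in_alg L) P2.
  apply/dvdpP; exists ('X^(p.+1) + (1 + tau%:A - h)%:P); apply/eqP.
  rewrite /P2 !(rmorphD (map_poly (in_alg L)), rmorphXn (map_poly (in_alg L)),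
                 rmorphM (map_poly (in_alg L))).
  rewrite rmorph1 /= map_polyX map_polyC /= -subr_eq0.
  apply/eqP; transitivity ((h ^+ 2 - tau%:A * h + 1)%:P); last by rewrite hx.
  by rewrite !(polyCD, polyCB, polyCN, polyCM, polyC1); ring.
have [s] : exists s, root ('X^(p.+1) + (1 + h)%:P) s.
  by apply: dvdp_split_root splitL (dvdp_mull _ G_dvd) _; rewrite size_XnaddC.
rewrite rootE !hornerE => /eqP /= hs.
by exists L, x, s.
Qed.

Section Point.

Variable cardF : #|F| = (p ^ 2)%N.
Variables (L : splittingFieldType F) (x s : L).
Hypothesis x_root : (x ^+ p.+1) ^+ 2 - tau%:A * x ^+ p.+1 + 1 = 0.
Hypothesis s_root : s ^+ p.+1 + 1 + x ^+ p.+1 = 0.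
Let h := x ^+ p.+1.

Lemma h_notin1 : h \notin 1%VS.
Proof.
apply/negP => /vlineP[c hc]; have := w_adm.2 c; apply/negP/negPn/eqP.
apply: (fmorph_inj (in_alg L)); rewrite rmorph0 -x_root -/h hc -!in_algE.
by rewrite !(rmorphD, rmorphN, rmorphM, rmorphXn, rmorph1).
Qed.

Lemma h_conj : h ^+ q = tau%:A - h.
Proof.
by apply: (quadratic_root_expf_card (c := 1)) h_notin1; rewrite scale1r.
Qed.

Lemma h_norm : h ^+ (p ^ 2).+1 = 1.
Proof.
rewrite -cardF exprS mulrC h_conj; apply/eqP; rewrite -subr_eq0 -oppr_eq0.
by rewrite -x_root; apply/eqP; rewrite /h; ring.
Qed.

Lemma x_fixed : x ^+ (q * q) = x.
Proof.
by rewrite cardF (expr_norm_twist (prime_gt0 hp) (erefl h) h_norm) expr1n mul1r.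
Qed.

Lemma x_not_fixed : x ^+ q != x.
Proof. by apply: contra h_notin1; rewrite -mem1v_expf_card => x1; apply: rpredX. Qed.

Lemma s_twist : s ^+ (q * q) = (w ^+ p.-1)%:A * s.
Proof.
have sE : s ^+ p.+1 = - (1 + h) by apply/eqP; rewrite -addr_eq0 addrA s_root.
have wE : w%:A = tau%:A + 2%:R :> L.
  by rewrite -!in_algE /tau rmorphB rmorph_nat subrK.
have e_norm : (- (1 + h)) ^+ (p ^ 2).+1 = w%:A.
  rewrite exprS -cardF expf_cardN expf_cardD expr1n h_conj wE.
  by apply/eqP; rewrite -subr_eq0 -oppr_eq0 -x_root; apply/eqP; rewrite /h; ring.
by rewrite cardF (expr_norm_twist (prime_gt0 hp) sE e_norm) -!in_algE rmorphXn.
Qed.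

Lemma s_neq0 : s != 0.
Proof.
apply: contra h_notin1 => /eqP s0; move: s_root; rewrite s0 expr0n add0r => h1.
by rewrite -[h](addKr 1) h1 addr0 rpredN rpred1.
Qed.

Lemma fermat_point_ratio_degree :
  ratio_field_degree (fermat_point s x) = (2 * p.+1)%N.
Proof.
have zeta_fixed : ((w ^+ p.-1)%:A : L) ^+ (q * q) = (w ^+ p.-1)%:A.
  by rewrite exprM !expf_card_alg.
have x_fixed1 : x ^+ (q * q) = 1 * x by rewrite mul1r x_fixed.
apply/eqP; rewrite eqn_dvd; apply/andP; split.
  apply: dim_adjoin_dvdn; apply: coord_ratios_fixed => i.
  rewrite expnM -mulnn; case: i => [[|[|[|//]]] ?] /=.
  - rewrite (exprXn_twist _ s_twist zeta_fixed) -!in_algE -rmorphXn.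
    by rewrite (prim_expr_order w_adm.1) rmorph1 mul1r.
  - by rewrite expr1n.
  - by rewrite (exprXn_twist _ x_fixed1 (expr1n _ _)) expr1n mul1r.
have coord_in (i : 'I_3) :
    fermat_point s x i \in <<1 & coord_ratios (fermat_point s x)>>%AS.
  apply/seqv_sub_adjoin.
  have := @mem_coord_ratios _ (fermat_point s x) i (lift ord0 ord0).
  by rewrite [fermat_point _ _ (lift _ _)]/= divr1 oner_eq0; apply.
exact: (dim_twisted_dvdn w_adm.1 (coord_in ord_max) x_not_fixed x_fixed
          (coord_in ord0) s_neq0 s_twist).
Qed.

Lemma exists_conic_through_fermat_point :
  exists c : 'M[F]_3, nonzero_qform c /\ on_conic c (fermat_point s x).
Proof.
have inF (y : L) : y ^+ q = y -> exists c : F, y = c%:A.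
  by move=> yq; have := mem1v_expf_card y; rewrite yq eqxx => /vlineP.
have [T xT] : exists T : F, x + x ^+ q = T%:A.
  by apply: inF; rewrite expf_cardD -exprM x_fixed addrC.
have [N xN] : exists N : F, x * x ^+ q = N%:A.
  by apply: inF; rewrite exprMn -exprM x_fixed mulrC.
exists (quadratic_qform T N); split; first exact: nonzero_quadratic_qform.
by apply: on_quadratic_qform; rewrite -xT -xN; ring.
Qed.

End Point.

End FermatConicPoint.

Theorem proposition7p3 (p : nat) (hp : prime p)
    (F : finFieldType) (hF : #|F| = (p ^ 2)%N) :
  exists (L : fieldExtType F) (c : 'M[F]_3) (t : 'I_3 -> L),
    [/\ nonzero_qform c, nonzero_coords t, on_fermat p t, on_conic c t
      & ratio_field_degree t = (2 * p.+1)%N].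
Proof.
have [w w_adm] := exists_admissible_norm hp hF.
have [L [x [s [x_root s_root]]]] := exists_fermat_twist_roots hp w_adm.
have [c [c_nz c_on]] := exists_conic_through_fermat_point hp w_adm hF s x_root.
exists L, c, (fermat_point s x); split=> //.
- by exists (lift ord0 ord0); rewrite oner_eq0.
- exact: on_fermat_point.
- exact (fermat_point_ratio_degree hp w_adm hF x_root s_root).
Qed.
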